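(* Let $a,b>0$, let $\chi_a,\chi_b$ be continuous kernels with $\operatorname{supp}\chi_a\subseteq[e^{-a},e^{a}]$ and $\operatorname{supp}\chi_b\subseteq[e^{-b},e^{b}]$, and let $\alpha\in\mathbb{R}$. Define $\chi:\mathbb{R}^+\to\mathbb{R}$ by $$\chi(u):=(1-\alpha)\,\chi_a(2ue^{-a-1})+\alpha\,\chi_b(2ue^{b}),\qquad u\in\mathbb{R}^+.$$ Then $\chi$ is a kernel with $\chi(1)=0$, and for every bounded $f:\mathbb{R}^+\to\mathbb{R}$ and every point $t\in\mathbb{R}^+$ of non-removable jump discontinuity of $f$, $$\lim_{w\to\infty}(S_w^\chi f)(t)=\alpha f(t+0)+(1-\alpha)f(t-0).$$
   Context: Let $\mathbb{R}^+=(0,\infty)$. For $\chi:\mathbb{R}^+\to\mathbb{R}$ and $\nu\ge 0$ set $M_\nu(\chi):=\sup_{u>0}\sum_{k\in\mathbb{Z}}|\chi(e^{-k}u)|\,|k-\log u|^\nu$ (with $|k-\log u|^0:=1$). A kernel is a function $\chi:\mathbb{R}^+\to\mathbb{R}$ such that (K1) $\sum_{k\in\mathbb{Z}}\chi(e^{-k}u)=1$ for every $u\in\mathbb{R}^+$, and (K2) $M_0(\chi)<\infty$ and $M_\nu(\chi)<\infty$ for some $\nu>0$. For a bounded $f:\mathbb{R}^+\to\mathbb{R}$, $w>0$ and $t\in\mathbb{R}^+$, the exponential sampling series is $(S_w^\chi f)(t)=\sum_{k\in\mathbb{Z}}\chi(e^{-k}t^w)\,f(e^{k/w})$. $t$ is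 a non-removable jump discontinuity of $f$ if $f(t+0)=\lim_{p\to0^+}f(t+p)$ and $f(t-0)=\lim_{p\to0^+}f(t-p)$ exist, are finite, and $f(t+0)\ne f(t-0)$. *)

From Stdlib Require Import Reals ZArith.
From Coquelicot Require Import Coquelicot.
Open Scope R_scope.

Definition rpow (x nu : R) : R :=
  if Req_EM_T x 0 then (if Req_EM_T nu 0 then 1 else 0) else Rpower x nu.

(* A series over Z: sum_{k>=0} g k converges to l1, sum_{k<0} g k to l2, l = l1+l2. *)
Definition Zsum_is (g : Z -> R) (l : R) : Prop :=
  exists l1 l2,
    is_series (fun n : nat => g (Z.of_nat n)) l1 /\
    is_series (fun n : nat => g (- Z.of_nat n - 1)%Z) l2 /\ l = l1 + l2.

(* Value of a series over Z (meaningful when it converges). *)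
Definition Zsum (g : Z -> R) : R :=
  Series (fun n : nat => g (Z.of_nat n)) + Series (fun n : nat => g (- Z.of_nat n - 1)%Z).

Definition M_finite (chi : R -> R) (nu : R) : Prop :=
  exists C : R, forall u : R, 0 < u ->
    exists s, Zsum_is (fun k => Rabs (chi (exp (- IZR k) * u)) * rpow (Rabs (IZR k - ln u)) nu) s
              /\ s <= C.

(* Kernel: (K1) and (K2); chi is only considered on (0,oo). *)
Definition is_kernel (chi : R -> R) : Prop :=
  (forall u : R, 0 < u -> Zsum_is (fun k => chi (exp (- IZR k) * u)) 1) /\
  M_finite chi 0 /\ (exists nu : R, 0 < nu /\ M_finite chi nu).

Definition sampling_series (chi f : R -> R) (w t : R) : R :=
  Zsum (fun k => chi (exp (- IZR k) * Rpower t w) * f (exp (IZR k / w))).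

Definition bounded_pos (f : R -> R) : Prop :=
  exists B : R, forall x : R, 0 < x -> Rabs (f x) <= B.

Definition jump_disc (f : R -> R) (t lp lm : R) : Prop :=
  filterlim f (at_right t) (locally lp) /\
  filterlim f (at_left t) (locally lm) /\ lp <> lm.

Definition cont_pos (g : R -> R) : Prop := forall u : R, 0 < u -> continuity_pt g u.

(* supp g ⊆ [e^{-a}, e^a] (the interval is closed, so this is equivalent to
   the nonzero set lying in it). *)
Definition supp_in (g : R -> R) (a : R) : Prop :=
  forall u : R, 0 < u -> g u <> 0 -> exp (- a) <= u <= exp a.

(* Write chi = (1 - alpha) g_a + alpha g_b with g_a = chi_a(c_a .), g_b = chi_b(c_b .),
   c_a = 2 e^{-a-1}, c_b = 2 e^b.  The proof has three parts.
   - Kernel: dilations and affine combinations (weights summing to 1) preserve the discrete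
     partition of unity (K1) and the finiteness of M_0; compact support then makes every
     moment M_nu finite, which gives (K2).
   - chi(1) = 0: the point 1 lies outside the dilated supports.
   - Limit: at u = t^w the shifts e^{-k} u with g_a(e^{-k} u) <> 0 have indices k in a band of
     fixed width strictly to the left of w ln t, those of g_b strictly to the right.  The
     corresponding samples e^{k/w} thus approach t from the left, resp. the right, uniformly,
     so each partial sampling series is a weighted average of values close to f(t-0),
     resp. f(t+0) (lemma jump_limit_of_bands). *)

From Stdlib Require Import Reals ZArith Lra FunctionalExtensionality.
From Coquelicot Require Import Coquelicot.
Open Scope R_scope.

Lemma series_lin (u v : nat -> R) (c1 c2 : R) : ex_series u -> ex_series v ->
  ex_series (fun n => c1 * u n + c2 * v n) /\
  Series (fun n => c1 * u n + c2 * v n) = c1 * Series u + c2 * Series v.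
Proof.
intros Eu Ev.
assert (E1 : ex_series (fun n => c1 * u n)) by exact (ex_series_scal_l c1 u Eu).
assert (E2 : ex_series (fun n => c2 * v n)) by exact (ex_series_scal_l c2 v Ev).
split.
- exact (ex_series_plus _ _ E1 E2).
- rewrite Series_plus by assumption. now rewrite !Series_scal_l.
Qed.

Lemma series_dominated (u v : nat -> R) : (forall n, Rabs (u n) <= v n) -> ex_series v ->
  ex_series u /\ Rabs (Series u) <= Series v.
Proof.
intros Huv Ev.
assert (Ea : ex_series (fun n => Rabs (u n))).
{ apply (ex_series_le (fun n => Rabs (u n)) v); [|exact Ev].
  intros n. unfold norm; simpl; unfold abs; simpl. now rewrite Rabs_Rabsolu. }
split; [now apply ex_series_Rabs|].
eapply Rle_trans; [now apply Series_Rabs|].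
apply Series_le; [|exact Ev]. intros n. split; [apply Rabs_pos|apply Huv].
Qed.

Definition Zex (g : Z -> R) : Prop :=
  ex_series (fun n : nat => g (Z.of_nat n)) /\ ex_series (fun n : nat => g (- Z.of_nat n - 1)%Z).

Lemma Zsum_is_iff (g : Z -> R) (l : R) : Zsum_is g l <-> Zex g /\ Zsum g = l.
Proof.
split.
- intros (l1 & l2 & H1 & H2 & ->). split; [split; eexists; eauto|].
  unfold Zsum. now rewrite (is_series_unique _ _ H1), (is_series_unique _ _ H2).
- intros [[E1 E2] <-].
  exists (Series (fun n : nat => g (Z.of_nat n))), (Series (fun n : nat => g (- Z.of_nat n - 1)%Z)).
  split; [now apply Series_correct|]. split; [now apply Series_correct|reflexivity].
Qed.

Lemma Zex_lin (g h : Z -> R) (c1 c2 : R) : Zex g -> Zex h ->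
  Zex (fun k => c1 * g k + c2 * h k) /\
  Zsum (fun k => c1 * g k + c2 * h k) = c1 * Zsum g + c2 * Zsum h.
Proof.
intros [G1 G2] [H1 H2].
destruct (series_lin _ _ c1 c2 G1 H1) as [P1 Q1].
destruct (series_lin _ _ c1 c2 G2 H2) as [P2 Q2].
split; [now split|]. unfold Zsum. rewrite Q1, Q2. ring.
Qed.

Lemma Zex_scal (g : Z -> R) (c : R) : Zex g ->
  Zex (fun k => c * g k) /\ Zsum (fun k => c * g k) = c * Zsum g.
Proof.
intros [G1 G2].
split; [split; [exact (ex_series_scal_l c _ G1)|exact (ex_series_scal_l c _ G2)]|].
unfold Zsum. rewrite !Series_scal_l. ring.
Qed.

Lemma Zex_le (g h : Z -> R) : (forall k, Rabs (g k) <= h k) -> Zex h ->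
  Zex g /\ Rabs (Zsum g) <= Zsum h.
Proof.
intros Hle [H1 H2].
destruct (series_dominated _ _ (fun n => Hle _) H1) as [P1 Q1].
destruct (series_dominated _ _ (fun n => Hle _) H2) as [P2 Q2].
split; [now split|]. unfold Zsum.
eapply Rle_trans; [apply Rabs_triang|lra].
Qed.
Lemma exp_le_iff (x y : R) : exp x <= exp y <-> x <= y.
Proof.
split; intros H.
- apply ln_le in H; [now rewrite !ln_exp in H|apply exp_pos].
- destruct H as [H| ->]; [left; now apply exp_increasing|right; reflexivity].
Qed.

(* Places the point 1 outside the dilated supports, and the bands on either side of w ln t. *)
Lemma ln2_bounds : 0 < ln 2 < 1.
Proof.
pose proof ln_lt_2. split; [lra|].
rewrite <- (ln_exp 1). apply ln_increasing; [lra|].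
pose proof (exp_ineq1 1 R1_neq_R0). lra.
Qed.

Lemma ln_dilate_exp (s u : R) : 0 < u -> ln (2 * exp s * u) = ln 2 + s + ln u.
Proof.
intros Hu. rewrite !ln_mult, ln_exp; [ring|lra|apply exp_pos|..|exact Hu].
apply Rmult_lt_0_compat; [lra|apply exp_pos].
Qed.

Lemma rpow0 (x : R) : rpow x 0 = 1.
Proof.
unfold rpow. destruct (Req_EM_T x 0), (Req_EM_T 0 0); try lra.
unfold Rpower. rewrite Rmult_0_l. apply exp_0.
Qed.

Lemma rpow_nonneg (x nu : R) : 0 <= rpow x nu.
Proof.
unfold rpow. destruct (Req_EM_T x 0), (Req_EM_T nu 0); try lra.
all: unfold Rpower; left; apply exp_pos.
Qed.

Lemma rpow_bounded (x r nu : R) : 0 <= x <= r -> 0 < r -> 0 <= nu -> rpow x nu <= 1 + Rpower r nu.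
Proof.
intros Hx Hr Hnu. assert (HP : 0 < Rpower r nu) by (unfold Rpower; apply exp_pos).
unfold rpow. destruct (Req_EM_T x 0); [destruct (Req_EM_T nu 0); lra|].
assert (Rpower x nu <= Rpower r nu) by (apply Rle_Rpower_l; lra). lra.
Qed.

Definition shifts (g : R -> R) (u : R) : Z -> R := fun k => g (exp (- IZR k) * u).

Lemma shifts_at_0 (g : R -> R) (u : R) : shifts g u 0 = g u.
Proof. unfold shifts. simpl. now rewrite Ropp_0, exp_0, Rmult_1_l. Qed.

Definition partition_of_unity (g : R -> R) : Prop :=
  forall u : R, 0 < u -> Zsum_is (shifts g u) 1.

Definition moment_terms (g : R -> R) (nu u : R) : Z -> R :=
  fun k => Rabs (shifts g u k) * rpow (Rabs (IZR k - ln u)) nu.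

Lemma M_finite_iff (g : R -> R) (nu : R) : M_finite g nu <->
  exists C, forall u, 0 < u -> Zex (moment_terms g nu u) /\ Zsum (moment_terms g nu u) <= C.
Proof.
split.
- intros [C HC]. exists C. intros u Hu.
  destruct (HC u Hu) as [s [Hs Hle]]. apply Zsum_is_iff in Hs.
  destruct Hs as [E <-]. now split.
- intros [C HC]. exists C. intros u Hu.
  destruct (HC u Hu) as [E Hle]. exists (Zsum (moment_terms g nu u)).
  split; [now apply Zsum_is_iff|exact Hle].
Qed.

Lemma M0_iff (g : R -> R) : M_finite g 0 <-> exists C, forall u, 0 < u ->
  Zex (fun k => Rabs (shifts g u k)) /\ Zsum (fun k => Rabs (shifts g u k)) <= C.
Proof.
assert (Hm : forall u, moment_terms g 0 u = fun k => Rabs (shifts g u k)).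
{ intros u. apply functional_extensionality. intros k. unfold moment_terms. rewrite rpow0. ring. }
rewrite M_finite_iff. now setoid_rewrite Hm.
Qed.

Lemma supp_in_ln (g : R -> R) (a v : R) : supp_in g a -> 0 < v -> g v <> 0 -> - a <= ln v <= a.
Proof.
intros Hs Hv Hg. destruct (Hs v Hv Hg) as [H1 H2].
rewrite <- (exp_ln v) in H1, H2 by exact Hv. rewrite exp_le_iff in H1, H2. lra.
Qed.

Lemma supp_index (g : R -> R) (a u : R) (k : Z) : supp_in g a -> 0 < u ->
  shifts g u k <> 0 -> ln u - a <= IZR k <= ln u + a.
Proof.
intros Hs Hu Hg. apply supp_in_ln with (a := a) in Hg; [|exact Hs|].
- rewrite ln_mult, ln_exp in Hg by (apply exp_pos || exact Hu). lra.
- apply Rmult_lt_0_compat; [apply exp_pos|exact Hu].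
Qed.

Lemma moments_of_support (g : R -> R) (a nu : R) : M_finite g 0 -> supp_in g a -> 0 <= nu ->
  M_finite g nu.
Proof.
intros HM Hs Hnu. apply M0_iff in HM. destruct HM as [C HC].
set (K := 1 + Rpower (Rabs a + 1) nu).
assert (HK : 0 <= K) by (unfold K, Rpower; pose proof (exp_pos (nu * ln (Rabs a + 1))); lra).
apply M_finite_iff. exists (K * C). intros u Hu. destruct (HC u Hu) as [E S].
assert (Hdom : forall k, Rabs (moment_terms g nu u k) <= K * Rabs (shifts g u k)).
{ intros k. unfold moment_terms.
  rewrite Rabs_mult, Rabs_Rabsolu, (Rabs_pos_eq (rpow _ _)) by apply rpow_nonneg.
  destruct (Req_dec (shifts g u k) 0) as [Z|NZ]; [rewrite Z, Rabs_R0; lra|].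
  assert (Hk := supp_index _ _ _ _ Hs Hu NZ).
  assert (rpow (Rabs (IZR k - ln u)) nu <= K).
  { apply rpow_bounded; [split; [apply Rabs_pos|]|pose proof (Rabs_pos a); lra|exact Hnu].
    pose proof (Rle_abs a). apply Rabs_le. lra. }
  pose proof (Rabs_pos (shifts g u k)). nra. }
destruct (Zex_scal _ K E) as [EK SK].
destruct (Zex_le _ _ Hdom EK) as [Em Sm]. rewrite SK in Sm.
split; [exact Em|].
pose proof (Rle_abs (Zsum (moment_terms g nu u))).
pose proof (Rmult_le_compat_l K _ _ HK S). lra.
Qed.

Definition dilate (c : R) (g : R -> R) : R -> R := fun u => g (c * u).

Lemma shifts_dilate (c : R) (g : R -> R) (u : R) : shifts (dilate c g) u = shifts g (c * u).
Proof.
apply functional_extensionality. intros k. unfold shifts, dilate. f_equal. ring.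
Qed.

Lemma partition_dilate (c : R) (g : R -> R) : 0 < c ->
  partition_of_unity g -> partition_of_unity (dilate c g).
Proof.
intros Hc Hg u Hu. rewrite shifts_dilate. apply Hg, Rmult_lt_0_compat; assumption.
Qed.

Lemma M0_dilate (c : R) (g : R -> R) : 0 < c -> M_finite g 0 -> M_finite (dilate c g) 0.
Proof.
intros Hc HM. apply M0_iff in HM. destruct HM as [C HC].
apply M0_iff. exists C. intros u Hu. rewrite shifts_dilate.
apply HC, Rmult_lt_0_compat; assumption.
Qed.

Lemma supp_dilate (c : R) (g : R -> R) (a : R) : 0 < c -> supp_in g a ->
  supp_in (dilate c g) (a + Rabs (ln c)).
Proof.
intros Hc Hs u Hu Hg. unfold dilate in Hg.
apply supp_in_ln with (a := a) in Hg; [|exact Hs|apply Rmult_lt_0_compat; assumption].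
rewrite ln_mult in Hg by assumption.
pose proof (Rle_abs (ln c)). pose proof (Rle_abs (- ln c)). rewrite Rabs_Ropp in *.
rewrite <- (exp_ln u) by exact Hu. rewrite !exp_le_iff. lra.
Qed.

Lemma dilate_band (g : R -> R) (a s u : R) (k : Z) : supp_in g a -> 0 < u ->
  shifts (dilate (2 * exp s) g) u k <> 0 -> ln 2 + s - a <= IZR k - ln u <= ln 2 + s + a.
Proof.
intros Hs Hu Hk. rewrite shifts_dilate in Hk.
apply supp_index with (a := a) in Hk; [|exact Hs|].
- rewrite ln_dilate_exp in Hk by exact Hu. lra.
- pose proof (exp_pos s). apply Rmult_lt_0_compat; [lra|exact Hu].
Qed.

Lemma dilate_vanishes_at_1 (g : R -> R) (a s : R) : supp_in g a ->
  (ln 2 + s + a < 0 \/ 0 < ln 2 + s - a) -> dilate (2 * exp s) g 1 = 0.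
Proof.
intros Hs Hband. rewrite <- shifts_at_0.
destruct (Req_dec (shifts (dilate (2 * exp s) g) 1 0) 0) as [Z|NZ]; [exact Z|].
apply dilate_band with (a := a) in NZ; [|exact Hs|lra].
rewrite ln_1 in NZ. simpl in NZ. lra.
Qed.

Definition mix (alpha : R) (g h : R -> R) : R -> R := fun u => (1 - alpha) * g u + alpha * h u.

Lemma partition_mix (alpha : R) (g h : R -> R) :
  partition_of_unity g -> partition_of_unity h -> partition_of_unity (mix alpha g h).
Proof.
intros Hg Hh u Hu. apply Zsum_is_iff.
destruct (proj1 (Zsum_is_iff _ _) (Hg u Hu)) as [Eg Sg].
destruct (proj1 (Zsum_is_iff _ _) (Hh u Hu)) as [Eh Sh].
destruct (Zex_lin _ _ (1 - alpha) alpha Eg Eh) as [E S].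
split; [exact E|]. change (Zsum (fun k => (1 - alpha) * shifts g u k + alpha * shifts h u k) = 1).
rewrite S, Sg, Sh. ring.
Qed.

(* M_nu is subadditive: M_nu(c1 g + c2 h) <= |c1| M_nu(g) + |c2| M_nu(h). *)
Lemma M_finite_mix (alpha nu : R) (g h : R -> R) :
  M_finite g nu -> M_finite h nu -> M_finite (mix alpha g h) nu.
Proof.
rewrite !M_finite_iff. intros [Cg HCg] [Ch HCh].
exists (Rabs (1 - alpha) * Cg + Rabs alpha * Ch). intros u Hu.
destruct (HCg u Hu) as [Eg Sg]. destruct (HCh u Hu) as [Eh Sh].
destruct (Zex_lin _ _ (Rabs (1 - alpha)) (Rabs alpha) Eg Eh) as [E S].
assert (Hdom : forall k, Rabs (moment_terms (mix alpha g h) nu u k) <=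
    Rabs (1 - alpha) * moment_terms g nu u k + Rabs alpha * moment_terms h nu u k).
{ intros k. unfold moment_terms, shifts, mix.
  pose proof (rpow_nonneg (Rabs (IZR k - ln u)) nu).
  rewrite Rabs_mult, Rabs_Rabsolu, (Rabs_pos_eq (rpow _ _)) by assumption.
  pose proof (Rabs_triang ((1 - alpha) * g (exp (- IZR k) * u)) (alpha * h (exp (- IZR k) * u))).
  rewrite !Rabs_mult in *. nra. }
destruct (Zex_le _ _ Hdom E) as [Em Sm]. rewrite S in Sm.
split; [exact Em|].
pose proof (Rle_abs (Zsum (moment_terms (mix alpha g h) nu u))).
pose proof (Rmult_le_compat_l _ _ _ (Rabs_pos (1 - alpha)) Sg).
pose proof (Rmult_le_compat_l _ _ _ (Rabs_pos alpha) Sh). lra.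
Qed.

Lemma kernel_mix_of_supports (alpha a b : R) (g h : R -> R) :
  partition_of_unity g -> M_finite g 0 -> supp_in g a ->
  partition_of_unity h -> M_finite h 0 -> supp_in h b -> is_kernel (mix alpha g h).
Proof.
intros Pg Mg Sg Ph Mh Sh. split; [now apply partition_mix|]. split.
- now apply M_finite_mix.
- exists 1. split; [lra|].
  apply M_finite_mix; [apply (moments_of_support _ a)|apply (moments_of_support _ b)]; auto; lra.
Qed.

Lemma weighted_average_approx (A y : Z -> R) (l e C By : R) :
  0 <= e -> Zsum_is A 1 -> Zex (fun k => Rabs (A k)) -> Zsum (fun k => Rabs (A k)) <= C ->
  (forall k, Rabs (y k) <= By) -> (forall k, A k <> 0 -> Rabs (y k - l) <= e) ->
  Zex (fun k => A k * y k) /\ Rabs (Zsum (fun k => A k * y k) - l) <= e * C.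
Proof.
intros He HA EA SA Hy Hclose. apply Zsum_is_iff in HA. destruct HA as [EA1 SA1].
destruct (Zex_scal _ By EA) as [EB _].
assert (Hbd : forall k, Rabs (A k * y k) <= By * Rabs (A k)).
{ intros k. rewrite Rabs_mult. pose proof (Hy k). pose proof (Rabs_pos (A k)). nra. }
destruct (Zex_le _ _ Hbd EB) as [Ey _].
destruct (Zex_lin _ _ 1 (- l) Ey EA1) as [Ed Sd].
destruct (Zex_scal _ e EA) as [Ee Se].
assert (Hdom : forall k, Rabs (1 * (A k * y k) + - l * A k) <= e * Rabs (A k)).
{ intros k. replace (1 * (A k * y k) + - l * A k) with (A k * (y k - l)) by ring.
  rewrite Rabs_mult. destruct (Req_dec (A k) 0) as [Z|NZ]; [rewrite Z, Rabs_R0; lra|].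
  pose proof (Rabs_pos (A k)). pose proof (Hclose k NZ). nra. }
destruct (Zex_le _ _ Hdom Ee) as [_ S]. rewrite Sd, SA1, Se in S.
split; [exact Ey|].
replace (Zsum (fun k => A k * y k) - l) with (1 * Zsum (fun k => A k * y k) + - l * 1) by ring.
pose proof (Rmult_le_compat_l _ _ _ He SA). lra.
Qed.

Lemma mix_average_error (A B y : Z -> R) (alpha lp lm e Ca Cb By : R) :
  0 <= e -> (forall k, Rabs (y k) <= By) ->
  Zsum_is A 1 -> Zex (fun k => Rabs (A k)) -> Zsum (fun k => Rabs (A k)) <= Ca ->
  (forall k, A k <> 0 -> Rabs (y k - lm) <= e) ->
  Zsum_is B 1 -> Zex (fun k => Rabs (B k)) -> Zsum (fun k => Rabs (B k)) <= Cb ->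
  (forall k, B k <> 0 -> Rabs (y k - lp) <= e) ->
  Rabs (Zsum (fun k => ((1 - alpha) * A k + alpha * B k) * y k) - (alpha * lp + (1 - alpha) * lm))
    <= e * (Rabs (1 - alpha) * Ca + Rabs alpha * Cb).
Proof.
intros He Hy HA EA SA CA HB EB SB CB.
destruct (weighted_average_approx A y lm e Ca By He HA EA SA Hy CA) as [EAy SAy].
destruct (weighted_average_approx B y lp e Cb By He HB EB SB Hy CB) as [EBy SBy].
destruct (Zex_lin _ _ (1 - alpha) alpha EAy EBy) as [_ S].
replace (fun k => ((1 - alpha) * A k + alpha * B k) * y k)
  with (fun k => (1 - alpha) * (A k * y k) + alpha * (B k * y k))
  by (apply functional_extensionality; intros k; ring).
rewrite S.
replace ((1 - alpha) * Zsum (fun k => A k * y k) + alpha * Zsum (fun k => B k * y k)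
         - (alpha * lp + (1 - alpha) * lm))
  with ((1 - alpha) * (Zsum (fun k => A k * y k) - lm) + alpha * (Zsum (fun k => B k * y k) - lp))
  by ring.
eapply Rle_trans; [apply Rabs_triang|]. rewrite !Rabs_mult.
pose proof (Rmult_le_compat_l _ _ _ (Rabs_pos (1 - alpha)) SAy).
pose proof (Rmult_le_compat_l _ _ _ (Rabs_pos alpha) SBy). lra.
Qed.

Lemma at_left_nbhd (f : R -> R) (t l e : R) : filterlim f (at_left t) (locally l) -> 0 < e ->
  exists d, 0 < d /\ forall y, Rabs (y - t) < d -> y < t -> Rabs (f y - l) < e.
Proof.
intros Hf He. apply filterlim_locally with (eps := mkposreal e He) in Hf.
destruct Hf as [d Hd]. exists d. split; [apply cond_pos|]. intros y Hy Hyt. exact (Hd y Hy Hyt).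
Qed.

Lemma at_right_nbhd (f : R -> R) (t l e : R) : filterlim f (at_right t) (locally l) -> 0 < e ->
  exists d, 0 < d /\ forall y, Rabs (y - t) < d -> t < y -> Rabs (f y - l) < e.
Proof.
intros Hf He. apply filterlim_locally with (eps := mkposreal e He) in Hf.
destruct Hf as [d Hd]. exists d. split; [apply cond_pos|]. intros y Hy Hyt. exact (Hd y Hy Hyt).
Qed.

Lemma exp_window (t d c : R) : 0 < t -> 0 < d -> exists W, 0 < W /\
  forall w s, W < w -> Rabs (s - w * ln t) <= c -> Rabs (exp (s / w) - t) < d.
Proof.
intros Ht Hd. pose proof (continuous_exp (ln t)) as Hc.
apply filterlim_locally with (eps := mkposreal d Hd) in Hc.
destruct Hc as [delta Hdelta]. pose proof (cond_pos delta) as Hdp.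
exists (Rabs c / delta + 1). split; [pose proof (Rabs_pos c); unfold Rdiv;
  pose proof (Rmult_le_pos _ _ (Rabs_pos c) (Rlt_le _ _ (Rinv_0_lt_compat _ Hdp))); lra|].
intros w s Hw Hs.
assert (Hw0 : 0 < w) by (pose proof (Rabs_pos c); unfold Rdiv in Hw;
  pose proof (Rmult_le_pos _ _ (Rabs_pos c) (Rlt_le _ _ (Rinv_0_lt_compat _ Hdp))); lra).
assert (Hcw : Rabs c < delta * w).
{ apply Rmult_lt_compat_l with (r := delta) in Hw; [|exact Hdp].
  unfold Rdiv in Hw. field_simplify in Hw; lra. }
rewrite <- (exp_ln t) by exact Ht. apply Hdelta.
change (Rabs (s / w - ln t) < delta).
replace (s / w - ln t) with ((s - w * ln t) / w) by (field; lra).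
unfold Rdiv. rewrite Rabs_mult, (Rabs_pos_eq (/ w)) by (left; now apply Rinv_0_lt_compat).
apply Rmult_lt_reg_r with w; [exact Hw0|]. rewrite Rmult_assoc, Rinv_l by lra.
pose proof (Rle_abs c). lra.
Qed.

Lemma sample_side (t w s : R) : 0 < t -> 0 < w ->
  (s - w * ln t < 0 -> exp (s / w) < t) /\ (0 < s - w * ln t -> t < exp (s / w)).
Proof.
intros Ht Hw.
assert (Hq : s / w - ln t = (s - w * ln t) * / w) by (field; lra).
pose proof (Rinv_0_lt_compat _ Hw).
split; intros Hs; rewrite <- (exp_ln t) by exact Ht; apply exp_increasing.
- assert ((s - w * ln t) * / w < 0) by (apply Rmult_neg_pos; assumption). lra.
- assert (0 < (s - w * ln t) * / w) by (apply Rmult_lt_0_compat; assumption). lra.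
Qed.

Lemma jump_limit_of_bands (g h f : R -> R) (alpha t lp lm c : R) :
  partition_of_unity g -> M_finite g 0 -> partition_of_unity h -> M_finite h 0 ->
  bounded_pos f -> 0 < t ->
  filterlim f (at_right t) (locally lp) -> filterlim f (at_left t) (locally lm) ->
  (forall w k, shifts g (Rpower t w) k <> 0 -> - c <= IZR k - w * ln t < 0) ->
  (forall w k, shifts h (Rpower t w) k <> 0 -> 0 < IZR k - w * ln t <= c) ->
  is_lim (fun w => sampling_series (mix alpha g h) f w t) p_infty (alpha * lp + (1 - alpha) * lm).
Proof.
intros Pg Mg Ph Mh [By HBy] Ht Hr Hl band_g band_h.
apply M0_iff in Mg. destruct Mg as [Cg HCg]. apply M0_iff in Mh. destruct Mh as [Ch HCh].
set (K := Rabs (1 - alpha) * Cg + Rabs alpha * Ch).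
apply is_lim_spec. intros eps. simpl. pose proof (cond_pos eps) as Heps.
set (e := eps / (Rabs K + 1)).
assert (He : 0 < e) by (apply Rdiv_lt_0_compat; [exact Heps|pose proof (Rabs_pos K); lra]).
destruct (at_left_nbhd _ _ _ _ Hl He) as [dl [Hdl HL]].
destruct (at_right_nbhd _ _ _ _ Hr He) as [dr [Hdr HR]].
destruct (exp_window t (Rmin dl dr) c Ht (Rmin_pos _ _ Hdl Hdr)) as [W [HW Hwin]].
exists W. intros w Hw.
assert (Hsample : forall k, Rabs (IZR k - w * ln t) <= c -> Rabs (exp (IZR k / w) - t) < Rmin dl dr)
  by (intros k; apply Hwin, Hw).
set (u := Rpower t w). assert (Hu : 0 < u) by apply exp_pos.
destruct (HCg u Hu) as [Eg Sg]. destruct (HCh u Hu) as [Eh Sh].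
change (Rabs (Zsum (fun k => ((1 - alpha) * shifts g u k + alpha * shifts h u k) * f (exp (IZR k / w)))
          - (alpha * lp + (1 - alpha) * lm)) < eps).
eapply Rle_lt_trans.
{ apply (mix_average_error _ _ _ alpha lp lm e Cg Ch By); try assumption.
  - left; exact He.
  - intros k. apply HBy, exp_pos.
  - now apply Pg.
  - intros k Hk. destruct (band_g w k Hk) as [H1 H2]. left. apply HL.
    + eapply Rlt_le_trans; [apply Hsample, Rabs_le; lra|apply Rmin_l].
    + apply (sample_side t w); lra.
  - now apply Ph.
  - intros k Hk. destruct (band_h w k Hk) as [H1 H2]. left. apply HR.
    + eapply Rlt_le_trans; [apply Hsample, Rabs_le; lra|apply Rmin_r].
    + apply (sample_side t w); lra. }
fold K. assert (e * (Rabs K + 1) = eps) by (unfold e; field; pose proof (Rabs_pos K); lra).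
pose proof (Rle_abs K). pose proof (Rabs_pos K). nra.
Qed.

Theorem theorem11 (a b alpha : R) (chi_a chi_b : R -> R) :
  0 < a -> 0 < b ->
  is_kernel chi_a -> cont_pos chi_a -> supp_in chi_a a ->
  is_kernel chi_b -> cont_pos chi_b -> supp_in chi_b b ->
  let chi := fun u => (1 - alpha) * chi_a (2 * u * exp (- a - 1)) + alpha * chi_b (2 * u * exp b) in
  is_kernel chi /\ chi 1 = 0 /\
  (forall (f : R -> R) (t lp lm : R), bounded_pos f -> 0 < t -> jump_disc f t lp lm ->
     is_lim (fun w => sampling_series chi f w t) p_infty (alpha * lp + (1 - alpha) * lm)).
Proof.
intros Ha Hb [Pa [Ma _]] _ Sa [Pb [Mb _]] _ Sb chi.
assert (Hca : 0 < 2 * exp (- a - 1)) by (pose proof (exp_pos (- a - 1)); lra).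
assert (Hcb : 0 < 2 * exp b) by (pose proof (exp_pos b); lra).
assert (Echi : chi = mix alpha (dilate (2 * exp (- a - 1)) chi_a) (dilate (2 * exp b) chi_b)).
{ apply functional_extensionality. intros u. unfold chi, mix, dilate.
  replace (2 * u * exp (- a - 1)) with (2 * exp (- a - 1) * u) by ring.
  replace (2 * u * exp b) with (2 * exp b * u) by ring. reflexivity. }
pose proof ln2_bounds as L2.
rewrite Echi. split; [|split].
- eapply kernel_mix_of_supports;
    try apply partition_dilate; try apply M0_dilate; try apply supp_dilate; eassumption.
- unfold mix. rewrite (dilate_vanishes_at_1 _ a), (dilate_vanishes_at_1 _ b) by (assumption || lra).
  ring.
- intros f t lp lm Hf Ht [Hr [Hl _]].
  apply (jump_limit_of_bands _ _ _ _ _ _ _ (2 * a + 2 * b + 2)); try assumption;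
    try apply partition_dilate; try apply M0_dilate; try assumption;
    intros w k Hk; rewrite <- (ln_Rpower t w).
  + apply (dilate_band _ a) in Hk; [lra|exact Sa|apply exp_pos].
  + apply (dilate_band _ b) in Hk; [lra|exact Sb|apply exp_pos].
Qed.
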